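(* Let $G$ be a digraph, $k\in\mathbb N$, let $T\subseteq V(G)$ be a set of at most $k+1$ vertices such that every non-trivial strong component of $G-T$ is $1$-out-regular, and let $Z\subseteq V(G)\setminus T$ be such that $G[Z\cup T]$ contains no subdigraph in $\mathcal F$. Let $G'=\mathsf{torso}(G,Z)$. Then for every $S\subseteq V(G)\setminus(Z\cup T)$, the digraph $G-S$ contains a subdigraph in $\mathcal F$ if and only if $G'-S$ contains a subdigraph in $\mathcal F_{\mathsf{bad}}$.
   Context: Digraphs may have multiple arcs. A digraph is \emph{strong} if it consists of a single vertex (then it is \emph{trivial}), or if for every two distinct vertices $u,v$ there is a directed path from $u$ to $v$; a strong component is an inclusion-maximal strong induced subdigraph. A strong component is \emph{1-out-regular} if each of its vertices has out-degree exactly $1$ in it. $\mathcal F$ denotes the collection of non-trivial strong subdigraphs of $G$ that are not a simple directed cycle (so a set $S$ meets every member of $\mathcal F$ present in $G$ iff every non-trivial strong component of $G-S$ is 1-out-regular). The digraph $\mathsf{torso}(G,Z)$ has vertex set $V(G)\setminus Z$; for $u,v\notin Z$ (possibly $u=v$, giving a self-loop) it contains an arc $(u,v)$ whenever $G$ has a $u\to v$ path (closed if $u=v$) of length at least $1$ all of whose internal vertices lie in $Z$. Such an arc is \emph{good} if this path $P$ is unique and there is no cycle $O$ in $G[Z]$ sharing a vertex with $P$; otherwise it is \emph{bad}. A cycle of $\mathsf{torso}(G,Z)$ is \emph{good} if all its arcs are good. $\mathcal F_{\mathsf{bad}}$ denotes the collection of strong subdigraphs of $\mathsf{torso}(G,Z)$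 that are neither trivial nor good cycles. *)

(* Digraphs with multiple arcs (and loops):
   vertex type V, arc type E, with tail/head maps tl hd : E -> V. *)
From mathcomp Require Import all_boot.
Set Implicit Arguments. Unset Strict Implicit. Unset Printing Implicit Defensive.

Section Digraph.
Variables (V E : finType) (tl hd : E -> V).

Definition subdig (inG : E -> Prop) (X : {set V}) (A : {set E}) : Prop :=
  forall a, a \in A -> [/\ inG a, tl a \in X & hd a \in X].

Definition arel (A : {set E}) : rel V :=
  fun x y => [exists a in A, (tl a == x) && (hd a == y)].

Definition strong (X : {set V}) (A : {set E}) : Prop :=
  X != set0 /\ forall u v, u \in X -> v \in X -> u != v -> connect (arel A) u v.

Definition trivial (X : {set V}) (A : {set E}) : Prop :=
  #|X| = 1 /\ A = set0.

Definition is_cycle (X : {set V}) (A : {set E}) : Prop :=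
  exists s : seq E, [/\ s != [::], cycle (fun a b => hd a == tl b) s,
     uniq (map tl s), A = [set a in s] & X = tl @: A].

Definition inF (inG : E -> Prop) (X : {set V}) (A : {set E}) : Prop :=
  [/\ subdig inG X A, strong X A, ~ trivial X A & ~ is_cycle X A].

Definition induced (X : {set V}) : {set E} :=
  [set a | (tl a \in X) && (hd a \in X)].

Definition strong_component (D C : {set V}) : Prop :=
  [/\ C \subset D, strong C (induced C) &
      forall Y : {set V}, C \proper Y -> Y \subset D -> ~ strong Y (induced Y)].

Definition out_regular1 (X : {set V}) (A : {set E}) : Prop :=
  forall x, x \in X -> #|[set a in A | tl a == x]| = 1.

(* P (a nonempty arc sequence) is a u -> v path (closed if u = v) whose
   internal vertices are pairwise distinct and lie in Z *)
Definition zpath (Z : {set V}) (u v : V) (P : seq E) : Prop :=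
  match P with
  | [::] => False
  | a :: P' => [/\ tl a = u, path (fun x y => hd x == tl y) a P',
                  hd (last a P') = v,
                  all (fun b => hd b \in Z) (belast a P')
                  & uniq (map hd (belast a P'))]
  end.

Definition zcycle_meets (Z : {set V}) (P : seq E) : Prop :=
  exists (XO : {set V}) (AO : {set E}),
    [/\ subdig (fun _ => True) XO AO, XO \subset Z, is_cycle XO AO &
        exists a, a \in P /\ (tl a \in XO \/ hd a \in XO)].

(* arcs of torso(G, Z): pairs (u, v) of vertices outside Z joined by a Z-path *)
Definition torso_arc (Z : {set V}) (p : V * V) : Prop :=
  [/\ p.1 \notin Z, p.2 \notin Z & exists P, zpath Z p.1 p.2 P].

Definition good_arc (Z : {set V}) (p : V * V) : Prop :=
  exists P, [/\ zpath Z p.1 p.2 P,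
                (forall Q, zpath Z p.1 p.2 Q -> Q = P) &
                ~ zcycle_meets Z P].

End Digraph.

(* member of F_bad: a subdigraph (X, A) of torso(G, Z) (arcs are pairs) *)
Definition inFbad (V E : finType) (tl hd : E -> V) (Z : {set V})
    (X : {set V}) (A : {set (V * V)}) : Prop :=
  [/\ subdig (@fst V V) (@snd V V) (torso_arc tl hd Z) X A, X \subset ~: Z,
      strong (@fst V V) (@snd V V) X A,
      ~ trivial X A &
      ~ (is_cycle (@fst V V) (@snd V V) X A /\ forall p, p \in A -> good_arc tl hd Z p)].

(* From G to the torso: a member (X, A) of F avoiding S cannot lie inside
   Z :|: T, so it has a vertex outside Z.  Project it: keep the vertices of X
   outside Z and join x to y whenever A contains a walk from x to y through Z.
   Paths of A project to paths of the projection, so it is strong, and it has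
   an arc.  If it were a good cycle, every arc e of A would lie on a Z-walk
   realizing one of its arcs; two arcs of A with a common tail would give two
   such walks from the same vertex, which the uniqueness of the realizing path
   of a good arc forces to coincide.  So every vertex of (X, A) has out-degree
   one and (X, A) would be a cycle.

   From the torso to G: lift a member (X', A') of F_bad to the arcs of all
   Z-paths realizing arcs of A', together with all cycles of G[Z] touching
   such a path.  If it were a cycle, its
   arcs would have distinct tails; then a walk leaving a vertex is determined
   by its start, so every arc of A' is realized by a unique Z-path, two arcs
   of A' never share a tail, and no realizing path touches a cycle of G[Z]
   (a walk entering such a cycle could never leave it, yet it ends outside Z).
   Hence A' would be a cycle of good arcs. *)

From mathcomp Require Import all_boot boolp.
Set Implicit Arguments. Unset Strict Implicit. Unset Printing Implicit Defensive.

Section Digraph.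
Variables (V E : finType) (tl hd : E -> V).
Local Notation linked := (fun a b : E => hd a == tl b).
Local Notation conn A := (connect (arel tl hd A)).

Lemma arelP (A : {set E}) x y :
  reflect (exists2 a, a \in A & tl a = x /\ hd a = y) (arel tl hd A x y).
Proof.
apply: (iffP existsP) => [[a /and3P[aA /eqP <- /eqP <-]]|[a aA [<- <-]]].
  by exists a.
by exists a; rewrite aA !eqxx.
Qed.

Lemma connect_arc (A : {set E}) a : a \in A -> conn A (tl a) (hd a).
Proof. by move=> aA; apply/connect1/arelP; exists a. Qed.

Lemma connect_arelS (A B : {set E}) x y : A \subset B -> conn A x y -> conn B x y.
Proof.
move=> sAB; apply: connect_sub => v w /arelP[a aA [<- <-]].
exact/connect_arc/(subsetP sAB).
Qed.

Lemma walk_connect (A : {set E}) a s b : path linked a s -> {subset a :: s <= A} ->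
  b \in a :: s -> conn A (tl a) (tl b) /\ conn A (hd b) (hd (last a s)).
Proof.
elim: s a b => [|c s IH] a b /=.
  by move=> _ _; rewrite inE => /eqP ->; split; apply: connect0.
case/andP=> /eqP hac pc sA.
have sA' : {subset c :: s <= A} by move=> y ys; apply: sA; rewrite inE ys orbT.
have aA : a \in A by apply: sA; rewrite mem_head.
have [_ c_last] := IH c c pc sA' (mem_head _ _).
rewrite inE => /orP[/eqP ->|bs].
  have cA : c \in A by apply: sA'; rewrite mem_head.
  by split; [apply: connect0 | rewrite hac; apply: connect_trans (connect_arc cA) c_last].
have [a_b ->] := IH c b pc sA' bs; split => //.
by apply: connect_trans a_b; rewrite -hac; apply: connect_arc.
Qed.

Lemma strong_out_arc inG X A : subdig tl hd inG X A -> strong tl hd X A ->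
  ~ trivial X A -> forall x, x \in X -> exists2 a, a \in A & tl a = x.
Proof.
move=> sd [_ st] nt x xX.
have [X1|/set0Pn[y]] := eqVneq (X :\ x) set0.
  have eX : X = [set x].
    apply/setP => y; rewrite inE; apply/idP/eqP => [yX|-> //].
    by apply/eqP/negPn/negP => yx; move/setP: X1 => /(_ y); rewrite !inE yx yX.
  have [A0|/set0Pn[a aA]] := eqVneq A set0; first by case: nt; rewrite /trivial eX cards1.
  by exists a => //; have [_ + _] := sd a aA; rewrite eX inE => /eqP.
rewrite !inE => /andP[yx yX].
have xy : x != y by rewrite eq_sym.
have /connectP[[|z p] /= pp ly] := st x y xX yX xy; first by rewrite ly eqxx in xy.
by case/andP: pp => /arelP[a aA [<- _]] _; exists a.
Qed.

Lemma is_cycle_tl_inj X A : is_cycle tl hd X A -> {in A &, injective tl}.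
Proof.
case=> s [_ _ us -> _] a b; rewrite !inE.
elim: s us => // c s IH /= /andP[tc us]; rewrite !inE.
case/orP=> [/eqP ->|aS] /orP[/eqP ->|bS] // tab.
- by case/negP: tc; rewrite tab map_f.
- by case/negP: tc; rewrite -tab map_f.
- exact: IH.
Qed.

Lemma strong_functional_is_cycle inG X A :
  subdig tl hd inG X A -> strong tl hd X A ->
  (forall x, x \in X -> exists2 a, a \in A & tl a = x) ->
  {in A &, injective tl} -> is_cycle tl hd X A.
Proof.
move=> sd [/set0Pn[x xX] st] out inj.
have [a0 _ _] := out x xX.
pose g v := odflt a0 [pick a in A | tl a == v].
have gP v : v \in X -> g v \in A /\ tl (g v) = v.
  move=> vX; rewrite /g; case: pickP => [a /andP[aA /eqP]|none] //=.
  by have [a aA ta] := out v vX; move: (none a); rewrite aA ta eqxx.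
have gK a : a \in A -> g (tl a) = a.
  by move=> aA; have [_ tX _] := sd a aA; have [gA tg] := gP _ tX; apply: inj.
(* [f] follows the unique out-arc [g v]; strongness makes X a single [f]-orbit. *)
pose f v := hd (g v).
have fX v : v \in X -> f v \in X by move=> /gP[/sd[]].
have conn_f v w : conn A v w -> fconnect f v w.
  by apply: connect_sub => {}v {}w /arelP[a aA [<- <-]]; rewrite connect1 /= ?/f ?gK.
have orbit_X y : y \in orbit f x -> y \in X.
  by case/trajectP => i _ ->; elim: i => //= i; apply: fX.
have X_orbit y : y \in X -> y \in orbit f x.
  rewrite -fconnect_orbit; have [<- //|xy yX] := eqVneq x y.
  exact: conn_f (st _ _ xX yX xy).
have f_cycle : fcycle f (orbit f x).
  apply: (all_iffLR orbitPcycle 2 0); rewrite /= inE.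
  have [-> |fxx] := eqVneq (f x) x; first exact: connect0.
  exact: conn_f (st _ _ (fX _ xX) xX fxx).
exists (map g (orbit f x)); split.
- by case: (orbit f x) (X_orbit x xX).
- rewrite cycle_map; apply: (sub_in_cycle (P := mem X)) f_cycle; last first.
    by apply/allP => y /orbit_X.
  by move=> v w vX wX /eqP <- /=; have [_ ->] := gP _ (fX _ vX).
- suff -> : map tl (map g (orbit f x)) = orbit f x by apply: orbit_uniq.
  rewrite -map_comp -[RHS]map_id; apply/eq_in_map => y /orbit_X yX /=.
  by have [] := gP _ yX.
- apply/setP => a; rewrite inE; apply/idP/mapP => [aA|[y /orbit_X yX ->]].
    by exists (tl a); [apply: X_orbit; case: (sd a aA) | rewrite gK].
  by have [] := gP _ yX.
- apply/setP => y; apply/idP/imsetP => [yX|[a aA ->]]; last by case: (sd a aA).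
  by have [gA tg] := gP _ yX; exists (g y).
Qed.

Lemma is_cycle_connect X A : is_cycle tl hd X A -> {in X &, forall v w, conn A v w}.
Proof.
case=> s [_ cs _ -> ->].
have : cycle (arel tl hd [set a in s]) (map tl s).
  rewrite cycle_map; apply: (sub_in_cycle (P := mem s)) cs; last by apply/allP.
  by move=> a b aS _ /eqP hab; apply/arelP; exists a; rewrite ?inE.
move/connect_cycle => cc v w /imsetP[a + ->] /imsetP[b + ->]; rewrite !inE => aS bS.
by apply: cc; apply: map_f.
Qed.

Lemma closed_walk_is_cycle s : s != [::] -> cycle linked s -> uniq (map tl s) ->
  subdig tl hd (fun _ => True) (tl @: [set a in s]) [set a in s] /\
  is_cycle tl hd (tl @: [set a in s]) [set a in s].
Proof.
move=> s0 cs us; split; last by exists s.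
move=> a; rewrite inE => aS; split; rewrite ?imset_f ?inE //.
by rewrite (eqP (next_cycle cs aS)) imset_f // inE mem_next.
Qed.

Lemma walk_stays (B : {set E}) (K : {set V}) a s a' :
  (forall b, b \in B -> tl b \in K -> hd b \in K) ->
  path linked a s -> {subset a :: s <= B} ->
  a' \in a :: s -> hd a' \in K -> hd (last a s) \in K.
Proof.
move=> closedK; elim: s a a' => [|c s IH] a a' /=.
  by move=> _ _; rewrite inE => /eqP ->.
case/andP=> /eqP hac pc sB; rewrite inE => /orP[/eqP ->|a'_cs] Ka'.
  apply: (IH c c pc _ (mem_head c s)); first by move=> y ys; apply: sB; rewrite inE ys orbT.
  by apply: closedK; [apply: sB; rewrite !inE eqxx orbT | rewrite -hac].
by apply: IH a'_cs Ka' => // y ys; apply: sB; rewrite inE ys orbT.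
Qed.

Section ZWalks.
Variable Z : {set V}.

Definition zwalk u v (W : seq E) : Prop :=
  if W is a :: s then
    [/\ tl a = u, path linked a s, hd (last a s) = v & all (mem Z) (map tl s)]
  else False.

Lemma map_tl_walk a s : path linked a s -> map tl s = map hd (belast a s).
Proof. by elim: s a => [|b s IH] a //= /andP[/eqP -> /IH ->]. Qed.

Lemma zpathE u v W :
  zpath tl hd Z u v W <-> zwalk u v W /\ uniq (map tl (behead W)).
Proof.
case: W => [|a s] /=; first by split=> [|[]].
split=> [[ta pa la za ua]|[[ta pa la za] ua]].
  by rewrite (map_tl_walk pa) all_map.
by rewrite (map_tl_walk pa) all_map in za ua.
Qed.

Lemma zpath_zwalk u v W : zpath tl hd Z u v W -> zwalk u v W.
Proof. by case/zpathE. Qed.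

Lemma path_hd a s b : path linked a s -> b \in a :: s ->
  hd b = hd (last a s) \/ exists2 c, c \in s & tl c = hd b.
Proof.
elim: s a => [|c s IH] a /=; first by move=> _; rewrite inE => /eqP ->; left.
case/andP=> /eqP hac pc; rewrite inE => /orP[/eqP ->|/(IH c pc)[->|[d ds <-]]].
- by right; exists c; rewrite ?mem_head.
- by left.
- by right; exists d; rewrite // inE ds orbT.
Qed.

Lemma zwalk_tl u v W b : zwalk u v W -> b \in W -> tl b = u \/ tl b \in Z.
Proof.
case: W => // a s [<- _ _ zs]; rewrite inE => /orP[/eqP ->|bs]; first by left.
by right; move/allP: zs; apply; apply: map_f.
Qed.

Lemma zwalk_hd u v W b : zwalk u v W -> b \in W ->
  hd b = v \/ exists2 c, c \in W & tl c = hd b.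
Proof.
case: W => // a s [_ pa <- _] /(path_hd pa)[->|[c cs <-]]; first by left.
by right; exists c; rewrite // inE cs orbT.
Qed.

Lemma zwalk_connect (B : {set E}) u v W b w : zwalk u v W -> {subset W <= B} ->
  b \in W -> w \in [:: tl b; hd b] -> conn B u w /\ conn B w v.
Proof.
case: W => // a s [<- pa <- _] sB bW; have [ab bv] := walk_connect pa sB bW.
have bb := connect_arc (sB b bW).
rewrite !inE => /orP[] /eqP ->; split=> //.
  exact: connect_trans bb bv.
exact: connect_trans ab bb.
Qed.

Lemma zwalk_connect_ends (B : {set E}) u v W :
  zwalk u v W -> {subset W <= B} -> conn B u v.
Proof.
case: W => // a s zW sB.
have ua : u \in [:: tl a; hd a] by case: zW => -> _ _ _; rewrite mem_head.
by have [] := zwalk_connect zW sB (mem_head a s) ua.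
Qed.

Lemma zwalk_ends u v u' v' W : zwalk u v W -> zwalk u' v' W -> u = u' /\ v = v'.
Proof. by case: W => // a s [<- _ <- _] [<- _ <- _]. Qed.

Lemma zwalk_cat x w y W1 W2 :
  zwalk x w W1 -> w \in Z -> zwalk w y W2 -> zwalk x y (W1 ++ W2).
Proof.
case: W1 => // a s; case: W2 => // b t [ta pa la za] wZ [tb pb lb zb]; split=> //=.
- by rewrite cat_path pa /= la tb eqxx.
- by rewrite last_cat.
- by rewrite map_cat all_cat za /= tb wZ.
Qed.

Definition zprefix x w (W : seq E) := if W is [::] then x = w else w \in Z /\ zwalk x w W.
Definition zsuffix w y (W : seq E) := if W is [::] then w = y else w \in Z /\ zwalk w y W.

Lemma zwalk_glue x y e W1 W2 :
  zprefix x (tl e) W1 -> zsuffix (hd e) y W2 -> zwalk x y (W1 ++ e :: W2).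
Proof.
move=> pre suf.
have ze : zwalk (tl e) y (e :: W2).
  case: W2 suf => [<- //|b t [eZ zt]].
  exact: (zwalk_cat (W1 := [:: e]) _ eZ zt).
by case: W1 pre => [-> //|a s [eZ zs]]; apply: zwalk_cat zs eZ ze.
Qed.

Lemma zwalk_consE u v a s : zwalk u v (a :: s) <-> tl a = u /\ zsuffix (hd a) v s.
Proof.
split=> [|[<- suf]]; last exact: (zwalk_glue (W1 := [::])).
case: s => [|c s] [ta /= pa la za] //; case/andP: pa => /eqP hac pc.
by case/andP: za => cZ zs; rewrite hac.
Qed.

Lemma zcycle_meetsS (P Q : seq E) :
  {subset P <= Q} -> zcycle_meets tl hd Z P -> zcycle_meets tl hd Z Q.
Proof.
move=> sPQ [XO [AO [sdO sOZ cO [a [aP touch]]]]].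
by exists XO, AO; split=> //; exists a; split=> //; apply: sPQ.
Qed.

Lemma zpath_cons a Q v : hd a \in Z -> zpath tl hd Z (hd a) v Q ->
  exists Q', [/\ zpath tl hd Z (tl a) v Q', {subset Q' <= a :: Q} &
                 Q' = a :: Q \/ zcycle_meets tl hd Z Q'].
Proof.
case: Q => [|b Q] aZ; first by case/zpathE.
case/zpathE => -[tb pb lb zb] ub.
have [/mapP[c cQ tc]|aQ] := boolP (hd a \in map tl Q); last first.
  exists [:: a, b & Q]; split=> //; last by left.
  by apply/zpathE; split; rewrite //= ?tb ?eqxx ?pb ?aZ ?zb ?aQ.
(* [hd a] already lies on [Q]: cut the loop, a cycle of G[Z] through [hd a]. *)
case/splitPr: cQ tc pb lb zb ub => Q1 Q2 tc.
rewrite cat_path last_cat /= => /andP[pQ1 /andP[/eqP lQ1 pQ2]] lb.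
rewrite map_cat all_cat cat_uniq /= => /andP[zQ1 /andP[cZ zQ2]].
case/and3P=> uQ1 /norP[cQ1 _] /andP[cQ2 uQ2].
exists [:: a, c & Q2]; split.
- by apply/zpathE; split; rewrite //= ?tc ?eqxx ?pQ2 ?cZ ?zQ2 ?cQ2.
- move=> x; rewrite !inE mem_cat inE => /or3P[-> //|-> |->]; by rewrite !orbT.
have cycle_bQ1 : cycle linked (b :: Q1) by rewrite /= rcons_path pQ1 /= lQ1 tb tc.
have uniq_bQ1 : uniq (map tl (b :: Q1)) by rewrite /= tb tc cQ1.
have [sdO cO] := closed_walk_is_cycle (s := b :: Q1) isT cycle_bQ1 uniq_bQ1.
right; exists (tl @: [set x in b :: Q1]), [set x in b :: Q1]; split=> //.
  apply/subsetP => y /imsetP[x]; rewrite !inE => /orP[/eqP -> ->|xQ1 ->].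
    by rewrite tb.
  by move/allP: zQ1; apply; apply: map_f.
by exists a; split; [rewrite mem_head | right; rewrite -tb imset_f // !inE eqxx].
Qed.

Lemma zwalk_shorten u v W : zwalk u v W ->
  exists Q, [/\ zpath tl hd Z u v Q, {subset Q <= W} &
                Q = W \/ zcycle_meets tl hd Z Q].
Proof.
case: W => // a s; elim: s a u => [|b s IH] a u.
  by move=> zw; exists [:: a]; split=> //; [apply/zpathE | left].
case=> ta /= /andP[/eqP hab pb] lb /andP[bZ zs].
have [Q [zQ sQ eQ]] := IH b (tl b) (And4 erefl pb lb zs).
rewrite -hab in bZ zQ; have [Q' [zQ' sQ' eQ']] := zpath_cons bZ zQ.
exists Q'; rewrite -ta; split=> //.
  move=> x /sQ'; rewrite inE => /orP[/eqP ->|/sQ xW]; first exact: mem_head.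
  by rewrite inE xW orbT.
case: eQ' => [->|]; last by right.
case: eQ => [->|mQ]; first by left.
by right; apply: zcycle_meetsS mQ => x xQ; rewrite inE xQ orbT.
Qed.

Lemma zwalk_det (B : {set E}) u v1 v2 P Q : {in B &, injective tl} ->
  zwalk u v1 P -> zwalk u v2 Q -> {subset P <= B} -> {subset Q <= B} ->
  v1 \notin Z -> v2 \notin Z -> P = Q.
Proof.
move=> inj; elim: P u Q => [|a s IH] u [|b t] //=.
move=> /zwalk_consE[ta sufP] /zwalk_consE[tb sufQ] sP sQ v1Z v2Z.
have ab : a = b.
  by apply: inj; [exact: sP (mem_head _ _) | exact: sQ (mem_head _ _) | rewrite ta tb].
subst b; congr (_ :: _).
case: s t IH sufP sufQ sP sQ => [|c s] [|d t] IH //=.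
- by move=> la [aZ _]; rewrite -la aZ in v1Z.
- by move=> [aZ _] la; rewrite -la aZ in v2Z.
move=> [_ zP] [_ zQ] sP sQ; apply: (IH (hd a) (d :: t) zP zQ) => // x xs.
  by apply: sP; rewrite inE xs orbT.
by apply: sQ; rewrite inE xs orbT.
Qed.

Lemma zwalk_avoids_cycle inG (B AO : {set E}) XO u v P b :
  {in B &, injective tl} -> AO \subset B -> subdig tl hd inG XO AO ->
  is_cycle tl hd XO AO -> XO \subset Z -> zwalk u v P -> {subset P <= B} ->
  v \notin Z -> b \in P -> tl b \in XO \/ hd b \in XO -> False.
Proof.
move=> inj sAO sdO cO sOZ zP sP vZ bP touch.
have closedO c : c \in B -> tl c \in XO -> hd c \in XO.
  case: (cO) => s [_ _ _ _ eXO] cB; rewrite {1}eXO => /imsetP[c' c'A tc].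
  have <- : c' = c by apply: inj => //; apply: (subsetP sAO).
  by case: (sdO c' c'A).
have hbO : hd b \in XO by case: touch => // /(closedO b (sP b bP)).
case: P zP sP bP => // a s [_ pa la _] sP bP.
have := walk_stays closedO pa sP bP hbO; rewrite la => /(subsetP sOZ).
by rewrite (negbTE vZ).
Qed.

Lemma good_arc_zwalk_uniq u v W1 W2 : good_arc tl hd Z (u, v) ->
  zwalk u v W1 -> zwalk u v W2 -> W1 = W2.
Proof.
case=> P [_ uniqP noP].
suff eqP W : zwalk u v W -> W = P by move=> /eqP -> /eqP ->.
case/zwalk_shorten=> Q [zQ _ [<-|mQ]]; first exact: uniqP.
by case: noP; rewrite -(uniqP _ zQ).
Qed.

End ZWalks.
End Digraph.

Section TorsoProjection.
Variables (V E : finType) (tl hd : E -> V) (Z : {set V}).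
Local Notation zwalk := (zwalk tl hd Z).
Local Notation zprefix := (zprefix tl hd Z).
Local Notation zsuffix := (zsuffix tl hd Z).

Definition zreach (A : {set E}) x y := exists2 W, zwalk x y W & {subset W <= A}.

Definition zproj (A : {set E}) : {set V * V} :=
  [set p | [&& p.1 \notin Z, p.2 \notin Z & `[< zreach A p.1 p.2 >]]].

Lemma zprojP A x y :
  reflect [/\ x \notin Z, y \notin Z & zreach A x y] ((x, y) \in zproj A).
Proof. by rewrite inE; apply: (iffP and3P) => -[-> -> /asboolP]. Qed.

Lemma zproj_torso_arc A p : p \in zproj A -> torso_arc tl hd Z p.
Proof.
case: p => x y /zprojP[xZ yZ [W /zwalk_shorten[Q [zQ _ _]] _]].
by split=> //; exists Q.
Qed.

Variables (inG : E -> Prop) (X : {set V}) (A : {set E}).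
Hypothesis sdA : subdig tl hd inG X A.
Local Notation conn A := (connect (arel tl hd A)).
Local Notation pconn A' := (connect (arel (@fst V V) (@snd V V) A')).

Lemma zproj_subdig : subdig fst snd (torso_arc tl hd Z) (X :\: Z) (zproj A).
Proof.
move=> [x y] pA; split; first exact: zproj_torso_arc pA.
all: case/zprojP: pA => xZ yZ [[|a s] // [ta _ ly _] sW]; rewrite /= inE ?xZ ?yZ.
  by rewrite -ta; case: (sdA (sW _ (mem_head a s))).
by rewrite -ly; case: (sdA (sW _ (mem_last a s))).
Qed.

Lemma connect_zproj x w : x \notin Z -> conn A x w ->
  exists x0 W, [/\ x0 \notin Z, pconn (zproj A) x x0, zprefix x0 w W & {subset W <= A}].
Proof.
move=> xZ /connectP[p pp ->]; elim/last_ind: p pp => [|p w' IH].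
  by exists x, [::]; split; rewrite ?connect0.
rewrite rcons_path last_rcons => /andP[/IH[x0 [W [x0Z cx0 pre sW]]]].
case/arelP=> e eA [te he].
have zWe : zwalk x0 w' (rcons W e).
  by rewrite -cats1; apply: zwalk_glue; rewrite ?te.
have sWe : {subset rcons W e <= A}.
  by move=> c; rewrite mem_rcons inE => /orP[/eqP -> //|/sW].
have [w'Z|w'Z] := boolP (w' \in Z).
  by exists x0, (rcons W e); split=> //; case: (rcons W e) zWe.
exists w', [::]; split=> //; apply: connect_trans cx0 (connect1 _).
by apply/arelP; exists (x0, w') => //; apply/zprojP; split=> //; exists (rcons W e).
Qed.

Lemma zwalk_exit w y : conn A w y -> y \notin Z ->
  exists y0 W, [/\ y0 \notin Z, zsuffix w y0 W & {subset W <= A}].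
Proof.
case/connectP=> p; elim: p w => [|w' p IH] w /=; first by move=> _ <- yZ; exists y, [::].
case/andP=> /arelP[e eA [te he]] pp ly yZ.
have [wZ|wZ] := boolP (w \in Z); last by exists w, [::].
have [y0 [W [y0Z suf sW]]] := IH w' pp ly yZ.
exists y0, (e :: W); split=> //; first by split=> //; apply/zwalk_consE; rewrite he.
by move=> c; rewrite inE => /orP[/eqP -> //|/sW].
Qed.

Variable u : V.
Hypotheses (uX : u \in X) (uZ : u \notin Z) (stA : strong tl hd X A).

Lemma zwalk_through_arc e : e \in A -> exists x y W1 W2,
  [/\ x \notin Z, y \notin Z, zprefix x (tl e) W1, zsuffix (hd e) y W2
    & {subset W1 ++ e :: W2 <= A}].
Proof.
move=> eA; have [_ teX heX] := sdA eA.
have conn_X v w : v \in X -> w \in X -> conn A v w.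
  by move=> vX wX; have [<-|vw] := eqVneq v w; [apply: connect0 | apply: stA.2].
have [x [W1 [xZ _ pre sW1]]] := connect_zproj uZ (conn_X _ _ uX teX).
have [y [W2 [yZ suf sW2]]] := zwalk_exit (conn_X _ _ heX uX) uZ.
exists x, y, W1, W2; split=> // c; rewrite mem_cat inE.
by case/or3P=> [/sW1|/eqP ->|/sW2].
Qed.

Lemma zproj_strong : strong fst snd (X :\: Z) (zproj A).
Proof.
split; first by apply/set0Pn; exists u; rewrite inE uZ.
move=> x y /setDP[xX xZ] /setDP[yX yZ] xy.
have [x0 [[|a s] [_ cx0 pre _]]] := connect_zproj xZ (stA.2 x y xX yX xy).
  by rewrite -pre.
by case: pre => yZ'; rewrite yZ' in yZ.
Qed.

Lemma zproj_nonempty e : e \in A -> exists p, p \in zproj A.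
Proof.
case/zwalk_through_arc=> x [y [W1 [W2 [xZ yZ pre suf sW]]]].
by exists (x, y); apply/zprojP; split=> //; exists (W1 ++ e :: W2); first apply: zwalk_glue.
Qed.

Lemma zproj_good_cycle_tl_inj :
  is_cycle fst snd (X :\: Z) (zproj A) ->
  (forall p, p \in zproj A -> good_arc tl hd Z p) -> {in A &, injective tl}.
Proof.
move=> cA' good e1 e2 e1A e2A t12.
have [x [y [W1 [W2 [xZ yZ pre suf1 sW]]]]] := zwalk_through_arc e1A.
have [x' [y' [W1' [W2' [_ y'Z _ suf2 sW']]]]] := zwalk_through_arc e2A.
have z1 : zwalk x y (W1 ++ e1 :: W2) by apply: zwalk_glue.
have z2 : zwalk x y' (W1 ++ e2 :: W2') by apply: zwalk_glue; rewrite -?t12.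
have sW2 : {subset W1 ++ e2 :: W2' <= A}.
  move=> c; rewrite !mem_cat inE => /or3P[cW1|/eqP -> //|cW2'].
    by apply: sW; rewrite mem_cat cW1.
  by apply: sW'; rewrite mem_cat inE cW2' !orbT.
have p1 : (x, y) \in zproj A by apply/zprojP; split=> //; exists (W1 ++ e1 :: W2).
have p2 : (x, y') \in zproj A by apply/zprojP; split=> //; exists (W1 ++ e2 :: W2').
have [ey] : (x, y) = (x, y') by apply: (is_cycle_tl_inj cA').
rewrite -ey in z2; move: (good_arc_zwalk_uniq (good _ p1) z1 z2) => /eqP.
by rewrite eqseq_cat // eqseq_cons => /and3P[_ /eqP].
Qed.

Lemma zproj_inFbad : ~ trivial X A -> ~ is_cycle tl hd X A ->
  inFbad tl hd Z (X :\: Z) (zproj A).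
Proof.
move=> ntA ncA; split.
- exact: zproj_subdig.
- by apply/subsetP => v /setDP[_ vZ]; rewrite inE.
- exact: zproj_strong.
- have [e eA _] := strong_out_arc sdA stA ntA uX.
  by case=> _ A'0; have [p] := zproj_nonempty eA; rewrite A'0 inE.
case=> cA' good; apply: ncA.
apply: strong_functional_is_cycle sdA stA (strong_out_arc sdA stA ntA) _.
exact: zproj_good_cycle_tl_inj.
Qed.

End TorsoProjection.

Section TorsoLift.
Variables (V E : finType) (tl hd : E -> V) (Z X' : {set V}) (A' : {set V * V}).
Hypotheses (sdA' : subdig fst snd (torso_arc tl hd Z) X' A') (sX'Z : X' \subset ~: Z)
  (stA' : strong fst snd X' A') (ntA' : ~ trivial X' A').
Local Notation zpath := (zpath tl hd Z).
Local Notation conn A := (connect (arel tl hd A)).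

Definition on_torso_path a := exists p P, [/\ p \in A', zpath p.1 p.2 P & a \in P].

Definition on_touching_cycle a := exists XO AO,
  [/\ subdig tl hd (fun _ => True) XO AO, XO \subset Z, is_cycle tl hd XO AO, a \in AO &
      exists p P b, [/\ p \in A', zpath p.1 p.2 P, b \in P & tl b \in XO \/ hd b \in XO]].

Definition lift : {set E} := [set a | `[< on_torso_path a >] || `[< on_touching_cycle a >]].

Lemma liftP a : a \in lift -> on_torso_path a \/ on_touching_cycle a.
Proof. by rewrite inE => /orP[] /asboolP; [left | right]. Qed.

Lemma torso_path_lift p P : p \in A' -> zpath p.1 p.2 P -> {subset P <= lift}.
Proof. by move=> pA zP a aP; rewrite inE; apply/orP; left; apply/asboolP; exists p, P. Qed.

Lemma touching_cycle_lift XO AO p P b :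
  subdig tl hd (fun _ => True) XO AO -> XO \subset Z -> is_cycle tl hd XO AO ->
  p \in A' -> zpath p.1 p.2 P -> b \in P -> tl b \in XO \/ hd b \in XO ->
  AO \subset lift.
Proof.
move=> sdO sOZ cO pA zP bP touch; apply/subsetP => a aO.
by rewrite inE; apply/orP; right; apply/asboolP; exists XO, AO; split=> //; exists p, P, b.
Qed.

Lemma torso_arc_zpath p : p \in A' ->
  [/\ p.1 \in X', p.2 \in X' & exists P, zpath p.1 p.2 P].
Proof. by case/sdA' => -[_ _ ?] ? ?. Qed.

Lemma X'_notin_Z v : v \in X' -> v \notin Z.
Proof. by move/(subsetP sX'Z); rewrite inE. Qed.

Lemma lift_vertices_X' x : x \in X' -> x \in tl @: lift.
Proof.
case/(strong_out_arc sdA' stA' ntA') => p pA <-.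
have [_ _ [[|a s] zP]] := torso_arc_zpath pA; first by case/zpathE: zP.
case/zpathE: (zP) => -[ta _ _ _] _.
by rewrite -ta imset_f // (torso_path_lift pA zP) ?mem_head.
Qed.

Lemma lift_connect x y : x \in X' -> y \in X' -> conn lift x y.
Proof.
move=> xX yX; have [<-|xy] := eqVneq x y; first exact: connect0.
apply: connect_sub (stA'.2 x y xX yX xy) => v w /arelP[p pA [<- <-]].
have [_ _ [P zP]] := torso_arc_zpath pA.
exact: zwalk_connect_ends (zpath_zwalk zP) (torso_path_lift pA zP).
Qed.

Lemma lift_connect_via_X' v : v \in tl @: lift ->
  exists x y, [/\ x \in X', y \in X', conn lift x v & conn lift v y].
Proof.
case/imsetP=> b /liftP[[p [P [pA zP bP]]]|[XO [AO [sdO sOZ cO bO meet]]]] ->.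
  have [xX yX _] := torso_arc_zpath pA; exists p.1, p.2.
  have tlb : tl b \in [:: tl b; hd b] by rewrite mem_head.
  by have [] := zwalk_connect (zpath_zwalk zP) (torso_path_lift pA zP) bP tlb.
case: meet => p [P [c [pA zP cP touch]]].
have [xX yX _] := torso_arc_zpath pA; exists p.1, p.2.
have [m mO mc] : exists2 m, m \in XO & m \in [:: tl c; hd c].
  by case: touch => ?; [exists (tl c) | exists (hd c)]; rewrite ?mem_head ?inE ?eqxx ?orbT.
have [pm mp] := zwalk_connect (zpath_zwalk zP) (torso_path_lift pA zP) cP mc.
have sAO := touching_cycle_lift sdO sOZ cO pA zP cP touch.
have [_ bO' _] := sdO b bO.
have [mb bm] := (is_cycle_connect cO mO bO', is_cycle_connect cO bO' mO).
split=> //; [apply: connect_trans pm _ | apply: connect_trans _ mp].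
all: exact: connect_arelS sAO _.
Qed.

Lemma lift_subdig : subdig tl hd (fun _ => True) (tl @: lift) lift.
Proof.
move=> b bL; split; rewrite ?imset_f //.
case/liftP: bL => [[p [P [pA zP bP]]]|[XO [AO [sdO sOZ cO bO meet]]]].
  case: (zwalk_hd (zpath_zwalk zP) bP) => [->|[c cP <-]].
    by apply: lift_vertices_X'; case: (torso_arc_zpath pA).
  by rewrite imset_f // (torso_path_lift pA zP).
case: meet => p [P [c [pA zP cP touch]]].
have [_ _] := sdO b bO; case: (cO) => s [_ _ _ _ ->].
exact/subsetP/imsetS/(touching_cycle_lift sdO sOZ cO pA zP cP touch).
Qed.

Lemma lift_vertices_sub : tl @: lift \subset X' :|: Z.
Proof.
apply/subsetP => _ /imsetP[b /liftP[[p [P [pA zP bP]]]|[XO [AO [sdO sOZ _ bO _]]]] ->].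
  rewrite inE; case: (zwalk_tl (zpath_zwalk zP) bP) => [->|->]; last exact: orbT.
  by case: (torso_arc_zpath pA) => ->.
by have [_ bO' _] := sdO b bO; rewrite inE (subsetP sOZ) ?orbT.
Qed.

Lemma lift_strong : strong tl hd (tl @: lift) lift.
Proof.
have [x xX] := set0Pn _ stA'.1.
split=> [|v w /lift_connect_via_X'[_ [y [_ yX _ vy]]]].
  by apply/set0Pn; exists x; apply: lift_vertices_X'.
case/lift_connect_via_X'=> x' [_ [x'X _ x'w _]] _.
exact: connect_trans vy (connect_trans (lift_connect yX x'X) x'w).
Qed.

Lemma lift_nontrivial : ~ trivial (tl @: lift) lift.
Proof.
have [x /lift_vertices_X'/imsetP[a aL _]] := set0Pn _ stA'.1.
by case=> _ L0; rewrite L0 inE in aL.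
Qed.

Lemma lift_not_cycle :
  ~ (is_cycle fst snd X' A' /\ forall p, p \in A' -> good_arc tl hd Z p) ->
  ~ is_cycle tl hd (tl @: lift) lift.
Proof.
move=> notGood /is_cycle_tl_inj inj; apply: notGood.
have zpath_uniq p P Q : p \in A' -> zpath p.1 p.2 P -> zpath p.1 p.2 Q -> P = Q.
  move=> pA zP zQ; have [_ /X'_notin_Z yZ _] := torso_arc_zpath pA.
  have [sP sQ] := (torso_path_lift pA zP, torso_path_lift pA zQ).
  exact: (zwalk_det inj (zpath_zwalk zP) (zpath_zwalk zQ) sP sQ yZ yZ).
have A'_inj : {in A' &, injective fst}.
  move=> [x y1] [x' y2] p1A p2A /= xx'; subst x'.
  have [_ /X'_notin_Z y1Z [P1 z1]] := torso_arc_zpath p1A.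
  have [_ /X'_notin_Z y2Z [P2 z2]] := torso_arc_zpath p2A.
  have [sP1 sP2] := (torso_path_lift p1A z1, torso_path_lift p2A z2).
  have eP := zwalk_det inj (zpath_zwalk z1) (zpath_zwalk z2) sP1 sP2 y1Z y2Z.
  by rewrite eP in z1; case: (zwalk_ends (zpath_zwalk z1) (zpath_zwalk z2)) => _ /= ->.
split; first exact: strong_functional_is_cycle sdA' stA' (strong_out_arc sdA' stA' ntA') A'_inj.
move=> p pA; have [_ yX [P zP]] := torso_arc_zpath pA.
exists P; split=> // [Q zQ|[XO [AO [sdO sOZ cO [b [bP touch]]]]]].
  by rewrite (zpath_uniq p P Q).
have sAO := touching_cycle_lift sdO sOZ cO pA zP bP touch.
apply: (zwalk_avoids_cycle inj sAO sdO cO sOZ (zpath_zwalk zP) _ (X'_notin_Z yX) bP touch).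
exact: torso_path_lift pA zP.
Qed.

End TorsoLift.

Unset Implicit Arguments. Set Strict Implicit.

Theorem lemma6 (V E : finType) (tl hd : E -> V) (k : nat) (T Z : {set V}) :
  #|T| <= k.+1 ->
  (forall C : {set V}, strong_component tl hd (~: T) C ->
     ~ trivial C (induced tl hd C) -> out_regular1 tl C (induced tl hd C)) ->
  [disjoint Z & T] ->
  ~ (exists (X : {set V}) (A : {set E}),
       X \subset Z :|: T /\ inF tl hd (fun _ => True) X A) ->
  forall S : {set V}, [disjoint S & Z :|: T] ->
  ((exists (X : {set V}) (A : {set E}),
      X \subset ~: S /\ inF tl hd (fun _ => True) X A) <->
   (exists (X : {set V}) (A : {set (V * V)}),
      X \subset ~: S /\ inFbad tl hd Z X A)).
Proof.
(* Only the absence of members of F inside Z :|: T is needed. *)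
move=> _ _ _ noF S dS; split.
  case=> X [A [sXS [sdA stA ntA ncA]]].
  have [sXZT|/subsetPn[u uX uZT]] := boolP (X \subset Z :|: T).
    by case: noF; exists X, A.
  have uZ : u \notin Z by apply: contra uZT; rewrite inE => ->.
  exists (X :\: Z), (zproj tl hd Z A); split.
    exact: subset_trans (subsetDl X Z) sXS.
  exact: (zproj_inFbad sdA uX uZ stA ntA ncA).
case=> X' [A' [sX'S [sdA' sX'Z stA' ntA' ngA']]].
exists (tl @: lift tl hd Z A'), (lift tl hd Z A'); split.
  apply: (subset_trans (lift_vertices_sub sdA')); rewrite subUset sX'S -disjoints_subset.
  by rewrite /= disjoint_sym (disjointWr (subsetUl Z T) dS).
split; [exact: (lift_subdig sdA' stA' ntA') | exact: (lift_strong sdA' stA' ntA') |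
       exact: (lift_nontrivial sdA' stA' ntA') | exact: (lift_not_cycle sdA' sX'Z stA' ntA' ngA')].
Qed.
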